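(* Let $M$ be a quad-flower with standard labelling. Then: (i) if $C$ is a non-spanning circuit of $M$, then $|C|\in\{4,6\}$; (ii) if $C$ is a circuit of $M$ with $|C|=4$, then $C$ is one of the $15$ four-element circuits listed in the definition of a quad-flower (the sets $\{p_i,q_i,s_i,t_i\}$ and the sets in condition (2) of the definition); (iii) for any $(i,j,k)\in\{(1,2,3),(2,3,1),(3,1,2)\}$ and any $Z_i\in\{\{p_i,q_i\},\{s_i,t_i\}\}$, $Z_j\in\{\{p_j,t_j\},\{q_j,s_j\}\}$, $Z_k\in\{\{p_k,s_k\},\{q_k,t_k\}\}$, the set $Z_i\cup Z_j\cup Z_k$ is a $6$-element circuit of $M$; (iv) if $C$ is a circuit of $M$ with $|C|=6$ that is not one of the circuits described in (iii), then $C=X_J$ for some $J\subseteq\{1,2,3\}$.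
   Context: A matroid $M$ is a quad-flower if $r(M)=r^*(M)=6$ and its ground set has a labelling $\bigcup_{\ell\in\{1,2,3\}}\{p_\ell,q_\ell,s_\ell,t_\ell\}$ such that for all $(i,j)\in\{(1,2),(2,3),(3,1)\}$: (1) $\{p_i,q_i,s_i,t_i\}$ is a circuit and a cocircuit; (2) $\{p_i,q_i,p_j,s_j\}$, $\{p_i,q_i,q_j,t_j\}$, $\{s_i,t_i,p_j,s_j\}$, $\{s_i,t_i,q_j,t_j\}$ are circuits; (3) $\{p_i,s_i,p_j,q_j\}$, $\{p_i,s_i,s_j,t_j\}$, $\{q_i,t_i,p_j,q_j\}$, $\{q_i,t_i,s_j,t_j\}$ are cocircuits. $M$ has standard labelling if its ground set is literally $\{p_\ell,q_\ell,s_\ell,t_\ell:\ell=1,2,3\}$ with this labelling being the identity. For $J\subseteq\{1,2,3\}$, $X_J$ denotes the $6$-element set containing $\{p_i,t_i\}$ for each $i\in J$ and $\{q_i,s_i\}$ for each $i\in\{1,2,3\}-J$. *)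

From mathcomp Require Import all_boot.
Set Implicit Arguments. Unset Strict Implicit. Unset Printing Implicit Defensive.

Record matroid (T : finType) := Matroid {
  indep : {set T} -> bool;
  indep0 : indep set0;
  indep_sub : forall A B : {set T}, A \subset B -> indep B -> indep A;
  indep_aug : forall A B : {set T}, indep A -> indep B -> #|A| < #|B| ->
     exists2 x, x \in B :\: A & indep (x |: A)
}.

Section MatroidNotions.
Variables (T : finType) (M : matroid T).

Definition rk (X : {set T}) : nat :=
  \max_(I : {set T} | (I \subset X) && indep M I) #|I|.
Definition mrank : nat := rk setT.
Definition basis (B : {set T}) : bool := maxset (indep M) B.
Definition circuit (C : {set T}) : bool := minset (fun X => ~~ indep M X) C.
Definition dual_indep (X : {set T}) : bool :=
  [exists B : {set T}, basis B && [disjoint X & B]].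
Definition corank : nat := \max_(I : {set T} | dual_indep I) #|I|.
Definition cocircuit (C : {set T}) : bool := minset (fun X => ~~ dual_indep X) C.
Definition spanning (X : {set T}) : bool := rk X == mrank.
End MatroidNotions.

(* Labels: E = 'I_4 * 'I_3, letter 0,1,2,3 = p,q,s,t; index 0,1,2 = 1,2,3 *)
Definition E : finType := ('I_4 * 'I_3)%type.
Definition pl (i : 'I_3) : E := (@Ordinal 4 0 isT, i).
Definition ql (i : 'I_3) : E := (@Ordinal 4 1 isT, i).
Definition sl (i : 'I_3) : E := (@Ordinal 4 2 isT, i).
Definition tl (i : 'I_3) : E := (@Ordinal 4 3 isT, i).

(* cyclic successor: (i, nxt i) ranges over (1,2),(2,3),(3,1) *)
Definition nxt (i : 'I_3) : 'I_3 := ordS i.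

Section QuadFlower.
Variables (T : finType) (M : matroid T) (lab : E -> T).
Let p i := lab (pl i). Let q i := lab (ql i).
Let s i := lab (sl i). Let t i := lab (tl i).

Definition quad_flower_labelling : Prop :=
  bijective lab /\ mrank M = 6 /\ corank M = 6 /\
  forall i : 'I_3, let j := nxt i in
    [/\ circuit M [set p i; q i; s i; t i],
        cocircuit M [set p i; q i; s i; t i],
        [/\ circuit M [set p i; q i; p j; s j], circuit M [set p i; q i; q j; t j],
            circuit M [set s i; t i; p j; s j] & circuit M [set s i; t i; q j; t j]]
      & [/\ cocircuit M [set p i; s i; p j; q j], cocircuit M [set p i; s i; s j; t j],
            cocircuit M [set q i; t i; p j; q j] & cocircuit M [set q i; t i; s j; t j]]].
End QuadFlower.

Definition quad_flower (T : finType) (M : matroid T) : Prop :=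
  exists lab, quad_flower_labelling M lab.

Definition quad_flower_std (M : matroid E) : Prop := quad_flower_labelling M id.

Definition listed4 (C : {set E}) : Prop :=
  exists i : 'I_3, let j := nxt i in
    C = [set pl i; ql i; sl i; tl i] \/ C = [set pl i; ql i; pl j; sl j] \/
    C = [set pl i; ql i; ql j; tl j] \/ C = [set sl i; tl i; pl j; sl j] \/
    C = [set sl i; tl i; ql j; tl j].

Definition Zset (i : 'I_3) (a b c : bool) : {set E} :=
  let j := nxt i in let k := nxt j in
  (if a then [set pl i; ql i] else [set sl i; tl i]) :|:
  (if b then [set pl j; tl j] else [set ql j; sl j]) :|:
  (if c then [set pl k; sl k] else [set ql k; tl k]).

Definition XJ (J : {set 'I_3}) : {set E} :=
  \bigcup_(i : 'I_3) (if i \in J then [set pl i; tl i] else [set ql i; sl i]).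

(* A circuit and a cocircuit never meet in exactly one element, and a circuit
   properly contains no other circuit.  Hence a circuit of at most r(M) = 6
   elements meets each of the 15 listed cocircuits in other than one element
   and contains a listed circuit only if it has 4 elements, while a circuit of
   r(M) + 1 = 7 elements is spanning.  Running through all 2^12 subsets of the
   ground set shows that the sets with these two properties are exactly the
   listed 4-circuits, the sets Z_i u Z_j u Z_k and the sets X_J.  Conversely,
   each Z_i u Z_j u Z_k avoids some listed cocircuit, so it is not a basis, hence
   dependent; since it contains no listed circuit, every circuit inside it has
   6 elements, so it is itself a circuit. *)

From mathcomp Require Import all_boot.
Set Implicit Arguments. Unset Strict Implicit. Unset Printing Implicit Defensive.

Lemma minset_proper (T : finType) (P : pred {set T}) (A B : {set T}) :
  minset P A -> B \proper A -> ~~ P B.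
Proof.
move=> minA ltBA; apply/negP => PB.
have eqBA := minsetinf minA PB (proper_sub ltBA).
by rewrite eqBA properxx in ltBA.
Qed.

Lemma card_setI_seq (T : finType) (A : {set T}) (s : seq T) :
  uniq s -> #|A :&: [set:: s]| = count (mem A) s.
Proof.
move=> uniq_s; rewrite -size_filter -(card_uniqP (filter_uniq _ uniq_s)).
by apply: eq_card => x; rewrite !inE mem_filter.
Qed.

Section MatroidFacts.
Variables (T : finType) (M : matroid T).

Lemma leq_card_rk (X I : {set T}) : I \subset X -> indep M I -> #|I| <= rk M X.
Proof.
by move=> sIX indI; apply: (leq_bigmax_cond (F := fun I : {set T} => #|I|)); rewrite sIX.
Qed.

Lemma indep_leq_mrank (I : {set T}) : indep M I -> #|I| <= mrank M.
Proof. exact/leq_card_rk/subsetT. Qed.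

Lemma rk_leq_mrank (X : {set T}) : rk M X <= mrank M.
Proof. by apply/bigmax_leqP => I /andP[_]; apply: indep_leq_mrank. Qed.

Lemma exists_indep_mrank : exists2 I, indep M I & #|I| = mrank M.
Proof.
have [|I /andP[_ indI] maxI] :=
  @eq_bigmax_cond _ [pred I : {set T} | (I \subset setT) && indep M I] (fun I => #|I|).
  by apply/card_gt0P; exists set0; rewrite inE subsetT indep0.
by exists I; rewrite // /mrank /rk maxI.
Qed.

Lemma indep_augment (A B : {set T}) : indep M A -> indep M B ->
  exists A', [/\ indep M A', A \subset A', A' \subset A :|: B & #|B| <= #|A'|].
Proof.
move: {2}(#|B| - #|A|) (leqnn (#|B| - #|A|)) => k.
elim: k A => [|k IHk] A gapA indA indB.
  by exists A; split; rewrite ?subsetUl // -subn_eq0 -leqn0.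
have [leBA | ltAB] := leqP #|B| #|A|; first by exists A; rewrite subsetUl.
have [x /setDP[xB xNA] indxA] := indep_aug indA indB ltAB.
have [|A' [indA' sxAA' sA'xAB leBA']] := IHk (x |: A) _ indxA indB.
  by rewrite cardsU1 xNA subnS -subn1 leq_subLR add1n.
exists A'; split=> //; first exact: subset_trans (subsetU1 x A) sxAA'.
by apply: subset_trans sA'xAB _; rewrite -setUA subUset sub1set inE xB orbT subxx.
Qed.

Lemma basis_card (B : {set T}) : basis M B -> #|B| = mrank M.
Proof.
move=> /maxsetP[indB maxB]; apply/eqP; rewrite eqn_leq indep_leq_mrank //=.
have [I indI <-] := exists_indep_mrank; rewrite leqNgt; apply/negP => ltBI.
have [x /setDP[_ xNB] indxB] := indep_aug indB indI ltBI.
by rewrite -(maxB _ indxB (subsetU1 x B)) setU11 in xNB.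
Qed.

Lemma indep_mrank_basis (A : {set T}) : indep M A -> mrank M <= #|A| -> basis M A.
Proof.
move=> indA leMA; apply/maxsetP; split=> // Y indY sAY; apply/esym/eqP.
by rewrite eqEcard sAY (leq_trans (indep_leq_mrank indY)).
Qed.

Lemma cocircuit_meets_basis (D B : {set T}) :
  cocircuit M D -> basis M B -> ~~ [disjoint D & B].
Proof.
move=> /minsetp /existsPn nindD basB; apply/negP => disDB.
by move: (nindD B); rewrite basB disDB.
Qed.

Lemma circuit_dep (C : {set T}) : circuit M C -> ~~ indep M C.
Proof. exact: minsetp. Qed.

Lemma circuit_proper_indep (C X : {set T}) : circuit M C -> X \proper C -> indep M X.
Proof. by move=> circC /(minset_proper circC)/negbNE. Qed.

Lemma cocircuit_proper_dual_indep (D X : {set T}) :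
  cocircuit M D -> X \proper D -> dual_indep M X.
Proof. by move=> cocD /(minset_proper cocD)/negbNE. Qed.

Lemma circuit_neq0 (C : {set T}) : circuit M C -> C != set0.
Proof. by move=> /circuit_dep; apply: contraNneq => ->; rewrite indep0. Qed.

Lemma circuit_card_leq (C : {set T}) : circuit M C -> #|C| <= (mrank M).+1.
Proof.
move=> circC; have [e eC] := set0Pn _ (circuit_neq0 circC).
have := indep_leq_mrank (circuit_proper_indep circC (properD1 eC)).
by rewrite (cardsD1 e C) eC.
Qed.

Lemma circuit_card_spanning (C : {set T}) :
  circuit M C -> #|C| = (mrank M).+1 -> spanning M C.
Proof.
move=> circC cardC; have [e eC] := set0Pn _ (circuit_neq0 circC).
have cardCe : #|C :\ e| = mrank M by move: cardC; rewrite (cardsD1 e) eC => -[].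
rewrite /spanning eqn_leq rk_leq_mrank -cardCe.
exact: leq_card_rk (subD1set C e) (circuit_proper_indep circC (properD1 eC)).
Qed.

(* If [C :&: D = [set e]], extending [C :\ e] by a basis avoiding [D :\ e]
   gives a basis avoiding all of [D]. *)
Lemma circuit_cocircuit_card_neq1 (C D : {set T}) :
  circuit M C -> cocircuit M D -> #|C :&: D| != 1.
Proof.
move=> circC cocD; apply/negP => /cards1P[e CDe].
have /setIP[eC eD] : e \in C :&: D by rewrite CDe set11.
have /existsP[B /andP[basB disB]] := cocircuit_proper_dual_indep cocD (properD1 eD).
have [A [indA sCeA sACB leBA]] :=
  indep_augment (circuit_proper_indep circC (properD1 eC)) (maxsetp basB).
have basA : basis M A by apply: indep_mrank_basis; rewrite -?(basis_card basB).
have eNA : e \notin A.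
  apply: contraNN (circuit_dep circC) => eA; apply: indep_sub indA.
  by rewrite -(setD1K eC) subUset sub1set eA.
apply: (negP (cocircuit_meets_basis cocD basA)).
rewrite disjoint_sym disjoint_subset; apply/subsetP => x xA; rewrite inE.
have xNe : x != e by apply: contraNneq eNA => <-.
apply/negP => xD; move/subsetP: sACB => /(_ x xA) /setUP[/setD1P[_ xC] | xB].
  have : x \in C :&: D by rewrite inE xC.
  by rewrite CDe inE (negbTE xNe).
by move: (disjointFl disB xB); rewrite !inE xNe xD.
Qed.

Lemma circuit_of_dep (X : {set T}) : ~~ indep M X ->
  (forall C, circuit M C -> C \subset X -> #|X| <= #|C|) -> circuit M X.
Proof.
move=> depX minX; have [C circC sCX] := minset_exists (P := fun X => ~~ indep M X) depX.
suff -> : X = C by [].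
by apply/eqP; rewrite eq_sym eqEcard sCX minX.
Qed.

End MatroidFacts.

Fixpoint bitseqs (n : nat) : seq (seq bool) :=
  if n is n'.+1 then [seq b :: bs | b <- [:: true; false], bs <- bitseqs n'] else [:: [::]].

Lemma mem_bitseqs (bs : seq bool) : bs \in bitseqs (size bs).
Proof.
by elim: bs => //= b bs IHbs; case: b; rewrite !mem_cat map_f ?orbT.
Qed.

(* The exhaustive check below runs under [vm_compute], where neither finset
   membership nor [enum 'I_3] reduces (both go through [insub] and the opaque
   [idP]).  Subsets of [E] are therefore encoded by their characteristic bit
   vectors along the explicit enumeration [els], and listed sets by the
   positions of their elements; [classifies] takes these encodings as
   arguments so that they are evaluated only once. *)
Definition ords3 : seq 'I_3 := [:: @Ordinal 3 0 isT; @Ordinal 3 1 isT; @Ordinal 3 2 isT].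

Lemma mem_ords3 (i : 'I_3) : i \in ords3.
Proof. by case: i => [[|[|[|n]]] ?]. Qed.

Definition els : seq E := [seq f i | i <- ords3, f <- [:: pl; ql; sl; tl]].

Lemma mem_els (x : E) : x \in els.
Proof. by case: x => [[[|[|[|[|l]]]] ?] [[|[|[|i]]] ?]]. Qed.

Lemma els_uniq : uniq els.
Proof. by []. Qed.

Definition code {pT : predType E} (A : pT) : seq bool := [seq x \in A | x <- els].

Lemma nth_code (pT : predType E) (A : pT) (x : E) :
  nth false (code A) (index x els) = (x \in A).
Proof. by rewrite (nth_map x) ?index_mem ?mem_els // nth_index ?mem_els. Qed.

Lemma size_code (pT : predType E) (A : pT) : size (code A) = 12.
Proof. by rewrite size_map. Qed.

Lemma count_code (A : {set E}) : count id (code A) = #|A|.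
Proof.
rewrite count_map -(card_setI_seq A els_uniq) (setIidPl _) //.
by apply/subsetP => x _; rewrite inE mem_els.
Qed.

Lemma code_set_seq (A : {set E}) (s : seq E) : code A = code s -> A = [set:: s].
Proof. by move=> eq_code; apply/setP => x; rewrite inE -!nth_code eq_code. Qed.

Definition positions (s : seq E) : seq nat := [seq index x els | x <- s].

Lemma count_positions (A : {set E}) (s : seq E) :
  count (nth false (code A)) (positions s) = count (mem A) s.
Proof. by rewrite count_map; apply: eq_count => x; rewrite /= nth_code. Qed.

Lemma all_positions (A : {set E}) (s : seq E) :
  all (nth false (code A)) (positions s) = all (mem A) s.
Proof. by rewrite all_map; apply: eq_all => x; rewrite /= nth_code. Qed.

Definition listed_circuits : seq (seq E) := flatten [seq let j := nxt i in
  [:: [:: pl i; ql i; sl i; tl i]; [:: pl i; ql i; pl j; sl j]; [:: pl i; ql i; ql j; tl j];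
      [:: sl i; tl i; pl j; sl j]; [:: sl i; tl i; ql j; tl j]] | i <- ords3].

Definition listed_cocircuits : seq (seq E) := flatten [seq let j := nxt i in
  [:: [:: pl i; ql i; sl i; tl i]; [:: pl i; sl i; pl j; ql j]; [:: pl i; sl i; sl j; tl j];
      [:: ql i; tl i; pl j; ql j]; [:: ql i; tl i; sl j; tl j]] | i <- ords3].

Lemma listed_quad (s : seq E) :
  s \in listed_circuits \/ s \in listed_cocircuits -> uniq s /\ #|[set:: s]| = 4.
Proof.
have /allP quads : all (fun s => uniq s && (size s == 4)) (listed_circuits ++ listed_cocircuits).
  by [].
move=> /orP; rewrite -mem_cat => /quads /andP[uniq_s /eqP size_s].
by rewrite cardsE (card_uniqP uniq_s).
Qed.

Lemma set_seq4 (a b c d : E) : [set:: [:: a; b; c; d]] = [set a; b; c; d].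
Proof. by apply/setP => x; rewrite !inE !orbA. Qed.

Lemma listed_circuits_listed4 (L : seq E) : L \in listed_circuits -> listed4 [set:: L].
Proof.
case/flattenP => _ /mapP[i _ ->] Li; exists i; move: Li.
by rewrite !inE => /or4P[| | | /orP[]] /eqP->; rewrite set_seq4; do ?[left; done | right].
Qed.

Definition zlist (i : 'I_3) (a b c : bool) : seq E :=
  let j := nxt i in let k := nxt j in
  (if a then [:: pl i; ql i] else [:: sl i; tl i]) ++
  (if b then [:: pl j; tl j] else [:: ql j; sl j]) ++
  (if c then [:: pl k; sl k] else [:: ql k; tl k]).

Definition xlist (f : 'I_3 -> bool) : seq E :=
  flatten [seq if f i then [:: pl i; tl i] else [:: ql i; sl i] | i <- ords3].

Lemma Zset_zlist (i : 'I_3) (a b c : bool) : Zset i a b c = [set:: zlist i a b c].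
Proof. by apply/setP => x; case: a b c => [] [] []; rewrite !inE /= ?inE !orbA. Qed.

Lemma XJ_xlist (f : 'I_3 -> bool) : XJ [set i | f i] = [set:: xlist f].
Proof.
apply/setP => x; rewrite inE; apply/bigcupP/flattenP => [[i _] | [s /mapP[i _ ->]]].
  rewrite inE => xi; exists (if f i then [:: pl i; tl i] else [:: ql i; sl i]).
    exact: (map_f _ (mem_ords3 i)).
  by case: (f i) xi; rewrite !inE.
by move=> xi; exists i => //; rewrite inE; case: (f i) xi; rewrite !inE.
Qed.

Definition zlists : seq (seq E) :=
  [seq zlist i (nth false bs 0) (nth false bs 1) (nth false bs 2) | i <- ords3, bs <- bitseqs 3].

Definition xlists : seq (seq E) := [seq xlist (nth false bs) | bs <- bitseqs 3].

Lemma zlistsP (s : seq E) : reflect (exists i a b c, s = zlist i a b c) (s \in zlists).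
Proof.
apply: (iffP allpairsP) => [[[i bs] [_ _ ->]] | [i [a [b [c ->]]]]].
  by exists i, (nth false bs 0), (nth false bs 1), (nth false bs 2).
by exists (i, [:: a; b; c]); rewrite mem_ords3 (mem_bitseqs [:: a; b; c]).
Qed.

Lemma xlists_XJ (s : seq E) : s \in xlists -> exists J, [set:: s] = XJ J.
Proof. by case/mapP => bs _ ->; exists [set i : 'I_3 | nth false bs i]; rewrite XJ_xlist. Qed.

Definition admissible_bits (cs ks : seq (seq nat)) (bs : seq bool) : bool :=
  [&& 0 < count id bs <= 6, all (fun D => count (nth false bs) D != 1) ks &
      all (fun L => all (nth false bs) L ==> (count id bs == 4)) cs].

Definition classifies (cs ks : seq (seq nat)) (zx : seq (seq bool)) (bs : seq bool) : bool :=
  admissible_bits cs ks bs ==>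
  (count id bs == 4) && has (all (nth false bs)) cs || (count id bs == 6) && (bs \in zx).

Lemma classifies_bitseqs :
  all (classifies (map positions listed_circuits) (map positions listed_cocircuits)
                  [seq code s | s <- zlists ++ xlists]) (bitseqs 12).
Proof. by vm_compute. Qed.

Definition admissible (C : {set E}) : bool :=
  [&& 0 < #|C| <= 6, all (fun D => count (mem C) D != 1) listed_cocircuits &
      all (fun L => all (mem C) L ==> (#|C| == 4)) listed_circuits].

Lemma admissible_bits_code (C : {set E}) :
  admissible_bits (map positions listed_circuits) (map positions listed_cocircuits) (code C)
  = admissible C.
Proof.
rewrite /admissible_bits count_code !all_map.
by congr [&& _, _ & _]; apply: eq_all => s; rewrite /= ?count_positions ?all_positions.
Qed.

Lemma admissible_classification (C : {set E}) : admissible C ->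
  (#|C| = 4 /\ exists2 L, L \in listed_circuits & [set:: L] \subset C) \/
  (#|C| = 6 /\ exists2 s, s \in zlists ++ xlists & C = [set:: s]).
Proof.
have := mem_bitseqs (code C); rewrite size_code => /(allP classifies_bitseqs).
rewrite /classifies admissible_bits_code count_code => classC /(implyP classC).
case/orP => [/andP[/eqP C4 /hasP[_ /mapP[L Lc ->]]] | /andP[/eqP C6 /mapP[s zx_s eq_code]]].
  rewrite all_positions => LC; left; split=> //; exists L => //.
  by apply/subsetP => x; rewrite inE => /(allP LC).
by right; split=> //; exists s => //; apply: code_set_seq.
Qed.

Lemma zlists_avoid_listed :
  all (fun s => [&& uniq s, size s == 6, all (fun L => ~~ all (mem s) L) listed_circuits
                 & has (fun D => ~~ has (mem s) D) listed_cocircuits]) zlists.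
Proof. by vm_compute. Qed.

Section StandardQuadFlower.
Variable M : matroid E.
Hypothesis HM : quad_flower_std M.

Lemma quad_flower_mrank : mrank M = 6.
Proof. by case: HM => _ []. Qed.

Lemma listed4_circuit (C : {set E}) : listed4 C -> circuit M C.
Proof.
case: HM => _ [_ [_ HMi]] [i /=]; have [circ_i _ [circ1 circ2 circ3 circ4] _] := HMi i.
by case=> [->|[->|[->|[->|->]]]].
Qed.

Lemma listed_cocircuit (D : seq E) : D \in listed_cocircuits -> cocircuit M [set:: D].
Proof.
case: HM => _ [_ [_ HMi]] /flattenP[_ /mapP[i _ ->]].
have [_ coc_i _ [coc1 coc2 coc3 coc4]] := HMi i.
by rewrite !inE => /or4P[| | | /orP[]] /eqP->; rewrite set_seq4.
Qed.

Lemma circuit_admissible (C : {set E}) : circuit M C -> #|C| <= 6 -> admissible C.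
Proof.
move=> circC leC6; apply/and3P; split.
- by rewrite card_gt0 (circuit_neq0 circC).
- apply/allP => D Dk; have [uniq_D _] := listed_quad (or_intror Dk).
  rewrite -card_setI_seq //; exact: circuit_cocircuit_card_neq1 circC (listed_cocircuit Dk).
- apply/allP => L Lc; apply/implyP => LC.
  have sLC : [set:: L] \subset C by apply/subsetP => x; rewrite inE => /(allP LC).
  have circL := listed4_circuit (listed_circuits_listed4 Lc).
  have [_ <-] := listed_quad (or_introl Lc).
  by rewrite (minsetinf circC (circuit_dep circL) sLC).
Qed.

Lemma nonspanning_circuit_card_leq (C : {set E}) :
  circuit M C -> ~~ spanning M C -> #|C| <= 6.
Proof.
move=> circC; apply: contraNT; rewrite -ltnNge => gtC6.
have leC7 := circuit_card_leq circC; rewrite quad_flower_mrank in leC7.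
by apply: circuit_card_spanning; rewrite // quad_flower_mrank; apply/eqP; rewrite eqn_leq leC7.
Qed.

Lemma short_circuit_classification (C : {set E}) : circuit M C -> #|C| <= 6 ->
  (#|C| = 4 /\ exists2 L, L \in listed_circuits & C = [set:: L]) \/
  (#|C| = 6 /\ exists2 s, s \in zlists ++ xlists & C = [set:: s]).
Proof.
move=> circC leC6.
case: (admissible_classification (circuit_admissible circC leC6)) => [[C4 [L Lc sLC]] | ];
  last by right.
have circL := listed4_circuit (listed_circuits_listed4 Lc).
by left; split=> //; exists L; rewrite // (minsetinf circC (circuit_dep circL) sLC).
Qed.

Lemma Zset_circuit (i : 'I_3) (a b c : bool) :
  circuit M (Zset i a b c) /\ #|Zset i a b c| = 6.
Proof.
have /(allP zlists_avoid_listed)/and4P[uniq_z /eqP size_z noL /hasP[D Dk disD]] :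
  zlist i a b c \in zlists by apply/zlistsP; exists i, a, b, c.
have cardZ : #|Zset i a b c| = 6 by rewrite Zset_zlist cardsE (card_uniqP uniq_z).
split=> //; apply: circuit_of_dep => [|C circC sCZ].
  apply/negP => indZ.
  have basZ : basis M (Zset i a b c).
    by apply: indep_mrank_basis; rewrite // cardZ quad_flower_mrank.
  apply: (negP (cocircuit_meets_basis (listed_cocircuit Dk) basZ)).
  rewrite Zset_zlist disjoint_subset; apply/subsetP => x; rewrite !inE => xD.
  by apply: contraNN disD => xz; apply/hasP; exists x.
have leC6 : #|C| <= 6 by rewrite -cardZ subset_leq_card.
case: (short_circuit_classification circC leC6) => [[_ [L Lc eqCL]] | [-> _]];
  last by rewrite cardZ.
case/negP: (allP noL L Lc); apply/allP => x xL.
by have := subsetP sCZ x; rewrite eqCL Zset_zlist !inE; apply.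
Qed.

End StandardQuadFlower.

Theorem lemma3p1 (M : matroid E) (HM : quad_flower_std M) :
  [/\ (forall C : {set E}, circuit M C -> ~~ spanning M C -> #|C| = 4 \/ #|C| = 6),
      (forall C : {set E}, circuit M C -> #|C| = 4 -> listed4 C),
      (forall (i : 'I_3) (a b c : bool), circuit M (Zset i a b c) /\ #|Zset i a b c| = 6)
    & (forall C : {set E}, circuit M C -> #|C| = 6 ->
         ~ (exists (i : 'I_3) (a b c : bool), C = Zset i a b c) ->
         exists J : {set 'I_3}, C = XJ J)].
Proof.
have classify := short_circuit_classification HM.
split.
- move=> C circC /(nonspanning_circuit_card_leq HM circC)/(classify C circC).
  by case=> [[-> _] | [-> _]]; [left | right].
- move=> C circC C4; have [|[_ [L Lc ->]] | [C6 _]] := classify C circC; first by rewrite C4.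
    exact: listed_circuits_listed4.
  by rewrite C4 in C6.
- exact: Zset_circuit HM.
move=> C circC C6 notZ; have [[C4 _] | [_ [s]]] := classify C circC (eq_leq C6).
  by rewrite C6 in C4.
rewrite mem_cat => /orP[/zlistsP[i [a [b [c ->]]]] eqC | /xlists_XJ[J eqJ] ->]; last by exists J.
by exfalso; apply: notZ; exists i, a, b, c; rewrite eqC Zset_zlist.
Qed.
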